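(* For the relay Markov decision process $\{(Y_n,A_n),n\ge0\}$ described in the context, there exists a stationary policy $u^*$ that minimizes the long-run average cost $V(u)=\lim_{N\to\infty}\frac{1}{N+1}E_u\big[\sum_{n=0}^N C(Y_n,A_n)\,\big|\,Y_0=(0,0)\big]$.
   Context: A relay node keeps two queues $q_1,q_2$. Time is slotted; in each slot a packet arrives to $q_i$ with probability $p_i$ ($i=1,2$), independently across queues and slots, at most one per queue per slot. $Y_n=(Y_n^1,Y_n^2)$ is the number of packets in $(q_1,q_2)$ at the end of slot $n$ just before the transmission opportunity, and $A_n\in\{0,1\}$ is the action ($0$ = do nothing, $1$ = transmit). If $Y^1_n+Y^2_n=0$ then $A_n=0$; if $Y^1_nY^2_n>0$ then $A_n=1$ (XOR-coded transmission of one packet from each queue). The state space is $\{(i,j)\in\mathbb{Z}_{\ge0}^2:\min(i,j)\le1\}$. With $\hat p_1=(1-p_1)(1-p_2)$, $\hat p_2=p_1(1-p_2)$, $\hat p_3=(1-p_1)p_2$, $\hat p_4=p_1p_2$, $[x]^+=\max(x,0)$: $P_1((i,j),([i-1]^+,[j-1]^+))=\hat p_1$, $P_1((i,j),(\max(i,1),[j-1]^+))=\hat p_2$, $P_1((i,j),([i-1]^+,\max(j,1)))=\hat p_3$, $P_1((i,j),(\max(i,1),\max(j,1)))=\hat p_4$, $P_0((i,j),(i,j))=\hat p_1$, $P_0((i,j),(i+1,j))=\hat p_2$, $P_0((i,j),(i,j+1))=\hat p_3$, $P_0((i,j),(i+1,j+1))=\hat p_4$. One-step cost: $C(Y_n,A_n)=C_h([Y^1_n-A_n]^+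 + [Y^2_n-A_n]^+)+C_tA_n$, where $C_t>0$ is the transmission cost and $C_h>0$ the per-slot holding cost. *)

From Stdlib Require Import Reals List.
From Coquelicot Require Import Coquelicot.
Import ListNotations.
Open Scope R_scope.

(* States (i,j) : number of packets in (q1,q2). Actions: false = 0 (idle), true = 1 (transmit). *)
Definition state := (nat * nat)%type.
Definition act_nat (a : bool) : nat := if a then 1%nat else 0%nat.

Definition trans (p1 p2 : R) (y : state) (a : bool) : list (R * state) :=
  let '(i, j) := y in
  let ph1 := (1 - p1) * (1 - p2) in
  let ph2 := p1 * (1 - p2) in
  let ph3 := (1 - p1) * p2 in
  let ph4 := p1 * p2 in
  if a then
    [ (ph1, (i - 1, j - 1)%nat);
      (ph2, (Nat.max i 1, j - 1)%nat);
      (ph3, (i - 1, Nat.max j 1)%nat);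
      (ph4, (Nat.max i 1, Nat.max j 1)) ]
  else
    [ (ph1, (i, j)); (ph2, (S i, j)); (ph3, (i, S j)); (ph4, (S i, S j)) ].

(* one-step cost C(y,a) = Ch([i-a]^+ + [j-a]^+) + Ct a  (nat subtraction is truncated) *)
Definition cost (Ch Ct : R) (y : state) (a : bool) : R :=
  Ch * INR ((fst y - act_nat a) + (snd y - act_nat a))%nat + Ct * INR (act_nat a).

(* A (history-dependent, randomized) policy: given the past history
   [(Y_0,A_0); ...; (Y_{n-1},A_{n-1})] and the current state Y_n, the
   probability of choosing A_n = 1. *)
Definition history := list (state * bool).
Definition policy := history -> state -> R.

Definition admissible (u : policy) : Prop :=
  forall (h : history) (y : state),
    0 <= u h y <= 1 /\
    ((fst y + snd y)%nat = 0%nat -> u h y = 0) /\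
    ((0 < fst y * snd y)%nat -> u h y = 1).

Definition stationary (u : policy) : Prop :=
  exists f : state -> R, forall h y, u h y = f y.

Fixpoint sum_next (l : list (R * state)) (g : state -> R) : R :=
  match l with
  | [] => 0
  | (q, y') :: l' => q * g y' + sum_next l' g
  end.

(* ecost N u h y = E_u[ sum_{n=k}^{k+N} C(Y_n,A_n) | past history h, Y_k = y ] *)
Fixpoint ecost (p1 p2 Ch Ct : R) (u : policy) (N : nat) (h : history) (y : state) : R :=
  let q := u h y in
  match N with
  | O => q * cost Ch Ct y true + (1 - q) * cost Ch Ct y false
  | S N' =>
      q * (cost Ch Ct y true +
           sum_next (trans p1 p2 y true)
             (fun y' => ecost p1 p2 Ch Ct u N' (h ++ [(y, true)]) y'))
    + (1 - q) * (cost Ch Ct y false +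
           sum_next (trans p1 p2 y false)
             (fun y' => ecost p1 p2 Ch Ct u N' (h ++ [(y, false)]) y'))
  end.

Definition avg_cost (p1 p2 Ch Ct : R) (u : policy) (N : nat) : R :=
  ecost p1 p2 Ch Ct u N [] (0%nat, 0%nat) / INR (S N).

Definition V (p1 p2 Ch Ct : R) (u : policy) : Rbar :=
  LimSup_seq (avg_cost p1 p2 Ch Ct u).

(* The proof verifies the average-cost optimality inequalities for a bounded relative value
   function.  Write z = Y - A (componentwise) for the post-decision state; the next state is z
   plus the arrivals.  Fix a level M with C_h M > C_t.  Along each axis, increments D_i (i <= M)
   are defined by a backward recursion from M, truncated so that D_i <= C_t, and D_i = 0 beyond
   M.  With K(i,j) = sum_{k<=i} D^1_k + sum_{k<=j} D^2_k, let h(i,j) = C_t + K(i-1,j-1) when both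
   queues are non-empty and h(i,j) = K(i,j) otherwise, and choose the gain g, by the intermediate
   value theorem, so that g + K(0,0) = E h((0,0) + arrivals).  Then every allowed action
   satisfies g + h(y) <= C(y,a) + E h(Y') on the state space, with equality for the threshold
   policy "transmit from (i,0) iff D^1_i = C_t" (and symmetrically) on a set of states which
   this policy never leaves.  As h is bounded, summing over N+1 slots gives
   E_u[sum C] >= (N+1) g - O(1) for every policy u and <= (N+1) g + O(1) for the threshold
   policy, whose average cost therefore converges to g. *)

From Stdlib Require Import Reals List Lra Lia.
From Coquelicot Require Import Coquelicot.
Import ListNotations.
Open Scope R_scope.

(** * Expected costs *)

Lemma sum_next_le (l : list (R * state)) (f f' : state -> R) :
  (forall q y, In (q, y) l -> 0 <= q /\ f y <= f' y) ->
  sum_next l f <= sum_next l f'.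
Proof.
  induction l as [|[q y] l IH]; intro Hl; simpl; [lra|].
  destruct (Hl q y (or_introl eq_refl)) as [Hq Hf].
  assert (Hrest : sum_next l f <= sum_next l f')
    by (apply IH; intros q' y' Hin; apply Hl; right; exact Hin).
  nra.
Qed.

Lemma trans_weight_nonneg p1 p2 y a q y' :
  0 <= p1 <= 1 -> 0 <= p2 <= 1 -> In (q, y') (trans p1 p2 y a) -> 0 <= q.
Proof.
  intros Hp1 Hp2; destruct y as [i j], a; simpl;
    intros [E|[E|[E|[E|[]]]]]; injection E as <- _; nra.
Qed.

Lemma sum_next_trans_shift p1 p2 y a c (f : state -> R) :
  sum_next (trans p1 p2 y a) (fun y' => c + f y') = c + sum_next (trans p1 p2 y a) f.
Proof. destruct y, a; simpl; ring. Qed.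

Definition post (y : state) (a : bool) : state :=
  (fst y - act_nat a, snd y - act_nat a)%nat.

Definition arrivals (p1 p2 : R) (z : state) : list (R * state) :=
  let '(i, j) := z in
  [ ((1 - p1) * (1 - p2), (i, j)); (p1 * (1 - p2), (S i, j));
    ((1 - p1) * p2, (i, S j)); (p1 * p2, (S i, S j)) ].

Lemma trans_post p1 p2 y a : trans p1 p2 y a = arrivals p1 p2 (post y a).
Proof.
  destruct y as [i j], a; unfold post; simpl.
  - replace (Nat.max i 1) with (S (i - 1)) by lia.
    replace (Nat.max j 1) with (S (j - 1)) by lia. reflexivity.
  - rewrite !Nat.sub_0_r. reflexivity.
Qed.

Lemma cost_post Ch Ct y a :
  cost Ch Ct y a = Ch * INR (fst (post y a) + snd (post y a)) + Ct * INR (act_nat a).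
Proof. reflexivity. Qed.

Lemma In_arrivals p1 p2 z q y : In (q, y) (arrivals p1 p2 z) ->
  y = z \/ y = (S (fst z), snd z) \/ y = (fst z, S (snd z)) \/ y = (S (fst z), S (snd z)).
Proof.
  destruct z as [i j]; simpl; intros [E|[E|[E|[E|[]]]]]; injection E as _ <-; tauto.
Qed.

Definition allowed (y : state) (a : bool) : Prop :=
  if a then (fst y + snd y <> 0)%nat else (fst y * snd y = 0)%nat.

Definition in_space (y : state) : Prop := (fst y <= 1 \/ snd y <= 1)%nat.

Lemma post_on_axis y a : in_space y -> allowed y a ->
  (fst (post y a) = 0 \/ snd (post y a) = 0)%nat.
Proof. destruct y as [i j], a; unfold in_space, allowed, post; simpl; nia. Qed.

Lemma in_space_closed p1 p2 y a q y' :
  in_space y -> allowed y a -> In (q, y') (trans p1 p2 y a) -> in_space y'.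
Proof.
  intros Hy Ha Hin; rewrite trans_post in Hin.
  pose proof (post_on_axis y a Hy Ha) as Hax.
  destruct (In_arrivals _ _ _ _ _ Hin) as [-> | [-> | [-> | ->]]];
    unfold in_space; cbn [fst snd]; lia.
Qed.

Lemma allowed_true_of_pos u hist y : admissible u -> 0 < u hist y -> allowed y true.
Proof.
  intros Hu Hpos E. destruct (Hu hist y) as (_ & H0 & _). rewrite (H0 E) in Hpos. lra.
Qed.

Lemma allowed_false_of_lt1 u hist y : admissible u -> u hist y < 1 -> allowed y false.
Proof.
  intros Hu Hlt. unfold allowed. destruct (Hu hist y) as (_ & _ & H1).
  destruct (Nat.eq_dec (fst y * snd y) 0) as [|Hne]; [assumption|].
  rewrite H1 in Hlt by lia. lra.
Qed.

Definition markov_policy (act : state -> bool) : policy := fun _ y => if act y then 1 else 0.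

Lemma markov_policy_admissible act :
  (forall y, allowed y (act y)) -> admissible (markov_policy act).
Proof.
  intros Hact hist y. unfold markov_policy. specialize (Hact y). unfold allowed in Hact.
  destruct (act y); repeat split; intros; lra || lia.
Qed.

Lemma markov_policy_stationary act : stationary (markov_policy act).
Proof. exists (fun y => if act y then 1 else 0). reflexivity. Qed.

Lemma Rle_convex_comb q T X1 X0 : 0 <= q <= 1 ->
  (0 < q -> T <= X1) -> (q < 1 -> T <= X0) -> T <= q * X1 + (1 - q) * X0.
Proof.
  intros Hq H1 H0.
  destruct (Req_dec q 0) as [->|Hq0]; [specialize (H0 ltac:(lra)); lra|].
  destruct (Req_dec q 1) as [->|Hq1]; [specialize (H1 ltac:(lra)); lra|].
  specialize (H1 ltac:(lra)); specialize (H0 ltac:(lra)); nra.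
Qed.

Definition ecost_tail p1 p2 Ch Ct (u : policy) (N : nat) (hist : history) (y : state) (a : bool)
  (y' : state) : R :=
  match N with
  | O => 0
  | S N' => ecost p1 p2 Ch Ct u N' (hist ++ [(y, a)]) y'
  end.

Lemma ecost_unfold p1 p2 Ch Ct u N hist y :
  ecost p1 p2 Ch Ct u N hist y =
    u hist y * (cost Ch Ct y true
                + sum_next (trans p1 p2 y true) (ecost_tail p1 p2 Ch Ct u N hist y true))
  + (1 - u hist y) * (cost Ch Ct y false
                + sum_next (trans p1 p2 y false) (ecost_tail p1 p2 Ch Ct u N hist y false)).
Proof. destruct N; [destruct y; simpl; ring | reflexivity]. Qed.

Lemma ecost_markov_unfold p1 p2 Ch Ct act N hist y :
  ecost p1 p2 Ch Ct (markov_policy act) N hist y =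
    cost Ch Ct y (act y) + sum_next (trans p1 p2 y (act y))
                             (ecost_tail p1 p2 Ch Ct (markov_policy act) N hist y (act y)).
Proof. rewrite ecost_unfold; unfold markov_policy; destruct (act y); ring. Qed.

Lemma Rdiv_ge_shift k g c E : 0 < k -> k * g + c <= E -> g + c / k <= E / k.
Proof.
  intros Hk H. apply Rle_div_r; [exact Hk|].
  replace ((g + c / k) * k) with (k * g + c) by (field; lra). exact H.
Qed.

Lemma Rdiv_le_shift k g c E : 0 < k -> E <= k * g + c -> E / k <= g + c / k.
Proof.
  intros Hk H. apply Rle_div_l; [exact Hk|].
  replace ((g + c / k) * k) with (k * g + c) by (field; lra). exact H.
Qed.

Lemma is_lim_seq_harmonic_shift g c : is_lim_seq (fun n => g + c / INR (S n)) g.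
Proof.
  assert (Hinv : is_lim_seq (fun n => / INR (S n)) 0).
  { replace (Finite 0) with (Rbar_inv p_infty) by reflexivity.
    apply is_lim_seq_inv; [|discriminate].
    apply (is_lim_seq_incr_1 INR), is_lim_seq_INR. }
  pose proof (is_lim_seq_plus' _ _ g (c * 0) (is_lim_seq_const g)
                (is_lim_seq_scal_l _ c 0 Hinv)) as H.
  rewrite Rmult_0_r, Rplus_0_r in H. exact H.
Qed.

(** * Verification of the optimality inequalities *)

Section Verification.
Variables (p1 p2 Ch Ct g B : R) (h : state -> R).
Hypotheses (Hp1 : 0 <= p1 <= 1) (Hp2 : 0 <= p2 <= 1).
Hypothesis h_bound : forall y, Rabs (h y) <= B.

Variable dom : state -> Prop.
Hypothesis dom_closed :
  forall y a q y', dom y -> allowed y a -> In (q, y') (trans p1 p2 y a) -> dom y'.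
Hypothesis h_subsolution : forall y a, dom y -> allowed y a ->
  g + h y <= cost Ch Ct y a + sum_next (trans p1 p2 y a) h.

Variables (act : state -> bool) (good : state -> Prop).
Hypothesis good_closed :
  forall y q y', good y -> In (q, y') (trans p1 p2 y (act y)) -> good y'.
Hypothesis h_supersolution : forall y, good y ->
  cost Ch Ct y (act y) + sum_next (trans p1 p2 y (act y)) h <= g + h y.

Lemma ecost_lower_of_tail u N hist y : admissible u -> dom y ->
  (forall a y', dom y' -> INR N * g - B + h y' <= ecost_tail p1 p2 Ch Ct u N hist y a y') ->
  INR (S N) * g + h y - B <= ecost p1 p2 Ch Ct u N hist y.
Proof.
  intros Hu Hy Htail.
  assert (Hstep : forall a, allowed y a ->
    INR (S N) * g + h y - B
      <= cost Ch Ct y a + sum_next (trans p1 p2 y a) (ecost_tail p1 p2 Ch Ct u N hist y a)).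
  { intros a Ha.
    assert (Hle : sum_next (trans p1 p2 y a) (fun y' => INR N * g - B + h y')
                  <= sum_next (trans p1 p2 y a) (ecost_tail p1 p2 Ch Ct u N hist y a)).
    { apply sum_next_le; intros q y' Hin; split.
      - exact (trans_weight_nonneg _ _ _ _ _ _ Hp1 Hp2 Hin).
      - apply Htail, (dom_closed y a q); assumption. }
    rewrite sum_next_trans_shift in Hle.
    pose proof (h_subsolution y a Hy Ha). rewrite S_INR. lra. }
  rewrite ecost_unfold. destruct (Hu hist y) as (Hq & _).
  apply Rle_convex_comb; [exact Hq | intro Hpos | intro Hlt].
  - exact (Hstep true (allowed_true_of_pos u hist y Hu Hpos)).
  - exact (Hstep false (allowed_false_of_lt1 u hist y Hu Hlt)).
Qed.

Lemma ecost_lower u : admissible u -> forall N hist y, dom y ->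
  INR (S N) * g + h y - B <= ecost p1 p2 Ch Ct u N hist y.
Proof.
  intros Hu N; induction N as [|N IH]; intros hist y Hy;
    apply ecost_lower_of_tail; try assumption; intros a y' Hy'; cbn [ecost_tail].
  - pose proof (proj1 (Rabs_le_between _ _) (h_bound y')). simpl. lra.
  - specialize (IH (hist ++ [(y, a)]) y' Hy'). lra.
Qed.

Lemma ecost_upper_of_tail N hist y : good y ->
  (forall y', good y' ->
     ecost_tail p1 p2 Ch Ct (markov_policy act) N hist y (act y) y' <= INR N * g + B + h y') ->
  ecost p1 p2 Ch Ct (markov_policy act) N hist y <= INR (S N) * g + h y + B.
Proof.
  intros Hy Htail.
  assert (Hle : sum_next (trans p1 p2 y (act y))
                  (ecost_tail p1 p2 Ch Ct (markov_policy act) N hist y (act y))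
                <= sum_next (trans p1 p2 y (act y)) (fun y' => INR N * g + B + h y')).
  { apply sum_next_le; intros q y' Hin; split.
    - exact (trans_weight_nonneg _ _ _ _ _ _ Hp1 Hp2 Hin).
    - apply Htail, (good_closed y q); assumption. }
  rewrite sum_next_trans_shift in Hle.
  pose proof (h_supersolution y Hy).
  rewrite ecost_markov_unfold, S_INR. lra.
Qed.

Lemma ecost_upper N hist y : good y ->
  ecost p1 p2 Ch Ct (markov_policy act) N hist y <= INR (S N) * g + h y + B.
Proof.
  revert hist y; induction N as [|N IH]; intros hist y Hy;
    apply ecost_upper_of_tail; try assumption; intros y' Hy'; cbn [ecost_tail].
  - pose proof (proj1 (Rabs_le_between _ _) (h_bound y')). simpl. lra.
  - specialize (IH (hist ++ [(y, act y)]) y' Hy'). lra.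
Qed.

Lemma avg_cost_lower u : admissible u -> dom (0, 0)%nat ->
  forall n, g + (h (0, 0)%nat - B) / INR (S n) <= avg_cost p1 p2 Ch Ct u n.
Proof.
  intros Hu Hdom0 n. apply Rdiv_ge_shift; [apply lt_0_INR; lia|].
  pose proof (ecost_lower u Hu n [] _ Hdom0). lra.
Qed.

Lemma avg_cost_upper : good (0, 0)%nat ->
  forall n, avg_cost p1 p2 Ch Ct (markov_policy act) n <= g + (h (0, 0)%nat + B) / INR (S n).
Proof.
  intros Hgood0 n. apply Rdiv_le_shift; [apply lt_0_INR; lia|].
  pose proof (ecost_upper n [] _ Hgood0). lra.
Qed.

Lemma markov_policy_optimal :
  dom (0, 0)%nat -> good (0, 0)%nat -> (forall y, allowed y (act y)) ->
  admissible (markov_policy act) /\ stationary (markov_policy act) /\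
  ex_lim_seq (avg_cost p1 p2 Ch Ct (markov_policy act)) /\
  forall u, admissible u ->
    Rbar_le (V p1 p2 Ch Ct (markov_policy act)) (V p1 p2 Ch Ct u).
Proof.
  intros Hdom0 Hgood0 Hact.
  pose proof (markov_policy_admissible act Hact) as Hadm.
  assert (Hlim : is_lim_seq (avg_cost p1 p2 Ch Ct (markov_policy act)) g).
  { apply (is_lim_seq_le_le (fun n => g + (h (0, 0)%nat - B) / INR (S n)) _
                            (fun n => g + (h (0, 0)%nat + B) / INR (S n))).
    - intro n. split; [apply avg_cost_lower | apply avg_cost_upper]; assumption.
    - apply is_lim_seq_harmonic_shift.
    - apply is_lim_seq_harmonic_shift. }
  split; [exact Hadm|]. split; [apply markov_policy_stationary|].
  split; [exists g; exact Hlim|].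
  intros u Hu. unfold V.
  rewrite (is_LimSup_seq_unique _ _ (is_lim_LimSup_seq _ _ Hlim)).
  rewrite <- (is_LimSup_seq_unique _ _
               (is_lim_LimSup_seq _ _ (is_lim_seq_harmonic_shift g (h (0, 0)%nat - B)))).
  apply LimSup_le. exists 0%nat. intros n _. exact (avg_cost_lower u Hu Hdom0 n).
Qed.

End Verification.

(** * Increments of the relative value function *)

Lemma lt_of_gain Ch Ct g c M i : 0 < Ch -> 0 <= c -> g <= Ct -> Ct < Ch * INR M ->
  Ch * INR i + c <= g -> (i < M)%nat.
Proof. intros HCh Hc Hg HM Hi. apply INR_lt, (Rmult_lt_reg_l Ch); lra. Qed.

Section Increments.
Variables (mu lam q Ch Ct g : R) (M : nat).

(* [incr i] is the increment K(i) - K(i-1) of the relative value along one axis: [lam] is the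
   probability that only this queue, [mu] that only the other queue, and [q] that this queue
   receives a packet.  For [i <= M] and [mu <> 0] it solves
   [mu (incr i - Ct) = lam (incr (i+1) - Ct) + Rmin (Ch i + q Ct - g) 0], with [incr (M+1)]
   read as [Ct]; it vanishes beyond [M], which keeps the relative value bounded. *)
Fixpoint excess (n i : nat) : R :=
  match n with
  | O => 0
  | S n' => (lam * excess n' (S i) + Rmin (Ch * INR i + q * Ct - g) 0) / mu
  end.

Definition incr (i : nat) : R := if (i <=? M)%nat then Ct + excess (S M - i) i else 0.

Definition slack (i : nat) : R :=
  lam * (incr (S i) - Ct) + Ch * INR i + q * Ct - g - mu * (incr i - Ct).

Hypotheses (Hmu : 0 <= mu) (Hlam : 0 <= lam <= q) (HCh : 0 < Ch) (HCt : 0 <= Ct).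
Hypotheses (Hg : g <= Ct) (HM : Ct < Ch * INR M) (Hmu0 : mu = 0 -> g <= q * Ct).

Lemma excess_nonpos n i : excess n i <= 0.
Proof.
  revert i; induction n as [|n IH]; intro i; simpl; [lra|].
  pose proof (IH (S i)). pose proof (Rmin_r (Ch * INR i + q * Ct - g) 0).
  assert (0 <= / mu)
    by (destruct (Req_dec mu 0) as [E|E];
        [rewrite E, Rinv_0; lra | apply Rlt_le, Rinv_0_lt_compat; lra]).
  assert (lam * excess n (S i) <= 0) by nra.
  unfold Rdiv. nra.
Qed.

Lemma excess_eq_0 n i : g <= Ch * INR i + q * Ct -> excess n i = 0.
Proof.
  revert i; induction n as [|n IH]; intros i Hi; simpl; [reflexivity|].
  rewrite IH, Rmin_right by (rewrite ?S_INR; lra). unfold Rdiv. ring.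
Qed.

Lemma incr_le i : incr i <= Ct.
Proof.
  unfold incr. destruct (Nat.leb_spec i M); [pose proof (excess_nonpos (S M - i) i)|]; lra.
Qed.

Lemma incr_beyond i : (M < i)%nat -> incr i = 0.
Proof. intro Hi. unfold incr. destruct (Nat.leb_spec i M); [lia | reflexivity]. Qed.

Lemma incr_eq_Ct i : (i <= M)%nat -> g <= Ch * INR i + q * Ct -> incr i = Ct.
Proof.
  intros HiM Hi. unfold incr. destruct (Nat.leb_spec i M); [|lia].
  rewrite excess_eq_0 by exact Hi. ring.
Qed.

(* [x / 0 = 0], so the increments are all [Ct] when [mu = 0]. *)
Lemma incr_mu0 i : mu = 0 -> (i <= M)%nat -> incr i = Ct.
Proof.
  intros E HiM. unfold incr. destruct (Nat.leb_spec i M); [|lia].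
  destruct (S M - i)%nat; cbn [excess]; [ring|]. rewrite E. unfold Rdiv. rewrite Rinv_0. ring.
Qed.

Lemma incr_lt_Ct i : (i <= M)%nat -> incr i < Ct -> 0 < mu /\ Ch * INR i + q * Ct < g.
Proof.
  intros HiM Hlt. split.
  - destruct (Req_dec mu 0) as [E|E]; [rewrite incr_mu0 in Hlt by assumption; lra | lra].
  - apply Rnot_le_lt. intro Hi. rewrite incr_eq_Ct in Hlt by (assumption || lra). lra.
Qed.

Lemma incr_rec i : (i < M)%nat -> mu <> 0 ->
  mu * (incr i - Ct) = lam * (incr (S i) - Ct) + Rmin (Ch * INR i + q * Ct - g) 0.
Proof.
  intros HiM E. unfold incr.
  destruct (Nat.leb_spec i M); [|lia]. destruct (Nat.leb_spec (S i) M); [|lia].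
  replace (S M - i)%nat with (S (S M - S i)) by lia. cbn [excess]. field. exact E.
Qed.

Lemma slack_nonneg i : 0 <= slack i.
Proof.
  unfold slack. destruct (Nat.lt_ge_cases i M) as [HiM|HMi].
  - destruct (Req_dec mu 0) as [E|E].
    + rewrite E, (incr_mu0 (S i)) by (assumption || lia).
      assert (0 <= Ch * INR i) by (apply Rmult_le_pos; [lra | apply pos_INR]).
      specialize (Hmu0 E). lra.
    + pose proof (incr_rec i HiM E). pose proof (Rmin_l (Ch * INR i + q * Ct - g) 0). lra.
  - rewrite (incr_beyond (S i)) by lia.
    assert (Ch * INR M <= Ch * INR i) by (apply Rmult_le_compat_l, le_INR; lra || lia).
    assert (mu * (incr i - Ct) <= 0) by (pose proof (incr_le i); nra).
    assert (0 <= (q - lam) * Ct) by (apply Rmult_le_pos; lra). nra.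
Qed.

Lemma slack_eq_0 i : 0 < mu -> Ch * INR i + q * Ct <= g -> slack i = 0.
Proof.
  intros Hpos Hi. unfold slack.
  assert (HiM : (i < M)%nat)
    by (apply (lt_of_gain Ch Ct g (q * Ct)); try apply Rmult_le_pos; lra).
  rewrite (incr_rec i HiM) by lra. rewrite Rmin_left by lra. ring.
Qed.

End Increments.

Lemma continuity_Rmin_0 (f : R -> R) : continuity f -> continuity (fun x => Rmin (f x) 0).
Proof.
  intros Hf x.
  apply (continuity_pt_ext (fun y => (f y - Rabs (f y)) * / 2)).
  { intro y. unfold Rmin, Rabs. destruct (Rle_dec (f y) 0), (Rcase_abs (f y)); lra. }
  apply continuity_pt_mult; [|apply continuity_pt_const; intros ? ?; reflexivity].
  apply continuity_pt_minus; [apply Hf|].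
  apply (continuity_pt_comp f Rabs); [apply Hf | apply Rcontinuity_abs].
Qed.

Lemma continuity_excess mu lam q Ch Ct n i :
  continuity (fun g => excess mu lam q Ch Ct g n i).
Proof.
  revert i; induction n as [|n IH]; intro i; simpl.
  - apply continuity_const. intros ? ?; reflexivity.
  - apply continuity_mult; [|apply continuity_const; intros ? ?; reflexivity].
    apply continuity_plus.
    + apply continuity_mult; [apply continuity_const; intros ? ?; reflexivity | apply IH].
    + apply continuity_Rmin_0, continuity_minus;
        [apply continuity_const; intros ? ?; reflexivity | apply derivable_continuous, derivable_id].
Qed.

Lemma continuity_incr mu lam q Ch Ct M i : continuity (fun g => incr mu lam q Ch Ct g M i).
Proof.
  unfold incr. destruct (i <=? M)%nat.
  - apply continuity_plus; [apply continuity_const; intros ? ?; reflexivity|].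
    apply continuity_excess.
  - apply continuity_const. intros ? ?; reflexivity.
Qed.

Fixpoint cumsum (D : nat -> R) (n : nat) : R :=
  match n with
  | O => 0
  | S n' => cumsum D n' + D (S n')
  end.

Lemma cumsum_eventually_constant (D : nat -> R) M : (forall k, (M < k)%nat -> D k = 0) ->
  forall n, (M <= n)%nat -> cumsum D n = cumsum D M.
Proof.
  intros HD n Hn. induction Hn as [|n Hn IH]; [reflexivity|].
  simpl. rewrite IH, HD by lia. ring.
Qed.

Lemma bounded_of_eventually_constant (f : nat -> R) M : (forall n, (M <= n)%nat -> f n = f M) ->
  exists B, forall n, Rabs (f n) <= B.
Proof.
  intro Hf.
  assert (Hprefix : forall m, exists B, forall n, (n <= m)%nat -> Rabs (f n) <= B).
  { induction m as [|m [B HB]].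
    - exists (Rabs (f O)). intros n Hn. replace n with O by lia. lra.
    - exists (Rmax B (Rabs (f (S m)))). intros n Hn.
      destruct (Nat.le_gt_cases n m) as [Hnm|Hnm].
      + eapply Rle_trans; [apply HB, Hnm | apply Rmax_l].
      + replace n with (S m) by lia. apply Rmax_r. }
  destruct (Hprefix M) as [B HB]. exists B. intro n.
  destruct (Nat.le_gt_cases n M) as [Hn|Hn]; [apply HB, Hn|].
  rewrite Hf by lia. apply HB. lia.
Qed.

(** * The relay model *)

Section Relay.
Variables (p1 p2 Ch Ct g : R) (M : nat).

Definition incr1 : nat -> R := incr ((1 - p1) * p2) (p1 * (1 - p2)) p1 Ch Ct g M.
Definition incr2 : nat -> R := incr (p1 * (1 - p2)) ((1 - p1) * p2) p2 Ch Ct g M.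

Definition post_value (z : state) : R := cumsum incr1 (fst z) + cumsum incr2 (snd z).

Definition rel_value (y : state) : R :=
  match y with
  | (S i, S j) => Ct + post_value (i, j)
  | _ => post_value y
  end.

Definition act_opt (y : state) : bool :=
  match y with
  | (O, O) => false
  | (S i, O) => if Rle_dec Ct (incr1 (S i)) then true else false
  | (O, S j) => if Rle_dec Ct (incr2 (S j)) then true else false
  | (S _, S _) => true
  end.

Definition tight (z : state) : Prop :=
  match z with
  | (O, O) => True
  | (S i, O) => 0 < (1 - p1) * p2 /\ Ch * INR (S i) + p1 * Ct <= g
  | (O, S j) => 0 < p1 * (1 - p2) /\ Ch * INR (S j) + p2 * Ct <= g
  | (S _, S _) => False
  end.

Definition good (y : state) : Prop := tight (post y (act_opt y)).

Definition post_slack (z : state) : R :=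
  match z with
  | (S i, O) => slack ((1 - p1) * p2) (p1 * (1 - p2)) p1 Ch Ct g M (S i)
  | (O, S j) => slack (p1 * (1 - p2)) ((1 - p1) * p2) p2 Ch Ct g M (S j)
  | _ => 0
  end.

Hypotheses (Hp1 : 0 <= p1 <= 1) (Hp2 : 0 <= p2 <= 1) (HCh : 0 < Ch) (HCt : 0 < Ct).
Hypotheses (HM1 : (1 <= M)%nat) (HM : Ct < Ch * INR M) (Hg : g <= Ct).
Hypothesis gain_eq : g = p1 * (1 - p2) * incr1 1 + (1 - p1) * p2 * incr2 1 + p1 * p2 * Ct.

Lemma incr1_le i : incr1 i <= Ct.
Proof. apply incr_le; try split; nra. Qed.

Lemma incr2_le i : incr2 i <= Ct.
Proof. apply incr_le; try split; nra. Qed.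

Lemma gain_le_1 : (1 - p1) * p2 = 0 -> g <= p1 * Ct.
Proof.
  intro E. rewrite gain_eq, E. pose proof (incr1_le 1).
  assert (p1 * (1 - p2) * incr1 1 <= p1 * (1 - p2) * Ct) by (apply Rmult_le_compat_l; nra).
  lra.
Qed.

Lemma gain_le_2 : p1 * (1 - p2) = 0 -> g <= p2 * Ct.
Proof.
  intro E. rewrite gain_eq, E. pose proof (incr2_le 1).
  assert ((1 - p1) * p2 * incr2 1 <= (1 - p1) * p2 * Ct) by (apply Rmult_le_compat_l; nra).
  lra.
Qed.

Local Ltac increment_hyps := first [assumption | exact gain_le_1 | exact gain_le_2 | split; nra | nra].

Lemma post_value_equation z : (fst z = 0 \/ snd z = 0)%nat ->
  Ch * INR (fst z + snd z) + sum_next (arrivals p1 p2 z) rel_value = g + post_value z + post_slack z.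
Proof.
  destruct z as [[|i] [|j]]; cbn [fst snd]; intro Hz; [| | |lia];
    rewrite ?Nat.add_0_l, ?Nat.add_0_r;
    unfold arrivals, rel_value, post_value, post_slack, slack; cbn [sum_next cumsum fst snd];
    fold incr1 incr2.
  - rewrite gain_eq. simpl. ring.
  - ring.
  - ring.
Qed.

Lemma post_slack_nonneg z : 0 <= post_slack z.
Proof. destruct z as [[|i] [|j]]; cbn; try lra; apply slack_nonneg; increment_hyps. Qed.

Lemma post_slack_tight z : tight z -> post_slack z = 0.
Proof.
  destruct z as [[|i] [|j]]; cbn [tight post_slack]; try tauto; intros [Hpos Hle];
    apply slack_eq_0; increment_hyps.
Qed.

Lemma tight_on_axis z : tight z -> (fst z = 0 \/ snd z = 0)%nat.
Proof. destruct z as [[|i] [|j]]; cbn; tauto. Qed.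

Lemma rel_value_le y a : allowed y a -> rel_value y <= Ct * INR (act_nat a) + post_value (post y a).
Proof.
  intro Ha. pose proof (incr1_le (fst y)). pose proof (incr2_le (snd y)).
  destruct y as [[|i] [|j]], a; unfold allowed in Ha; unfold rel_value, post, post_value;
    cbn [fst snd act_nat cumsum INR Nat.sub] in *; rewrite ?Nat.sub_0_r; lra || lia.
Qed.

Lemma rel_value_opt y : rel_value y = Ct * INR (act_nat (act_opt y)) + post_value (post y (act_opt y)).
Proof.
  pose proof (incr1_le (fst y)). pose proof (incr2_le (snd y)).
  destruct y as [[|i] [|j]]; unfold act_opt, rel_value, post, post_value;
    try destruct (Rle_dec Ct _); cbn [fst snd act_nat cumsum INR Nat.sub] in *;
    rewrite ?Nat.sub_0_r; lra.
Qed.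

Lemma act_opt_allowed y : allowed y (act_opt y).
Proof. destruct y as [[|i] [|j]]; cbn; try destruct (Rle_dec Ct _); cbn; lia. Qed.

Lemma bellman_subsolution y a : in_space y -> allowed y a ->
  g + rel_value y <= cost Ch Ct y a + sum_next (trans p1 p2 y a) rel_value.
Proof.
  intros Hy Ha. rewrite cost_post, trans_post.
  pose proof (post_value_equation _ (post_on_axis y a Hy Ha)).
  pose proof (post_slack_nonneg (post y a)). pose proof (rel_value_le y a Ha). lra.
Qed.

Lemma bellman_opt y : good y ->
  cost Ch Ct y (act_opt y) + sum_next (trans p1 p2 y (act_opt y)) rel_value <= g + rel_value y.
Proof.
  intro Hy. rewrite cost_post, trans_post.
  pose proof (post_value_equation _ (tight_on_axis _ Hy)) as E.
  rewrite (post_slack_tight _ Hy) in E. pose proof (rel_value_opt y). lra.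
Qed.

Lemma tight_down1 i : tight (S i, O) -> tight (i, O).
Proof.
  destruct i as [|i]; cbn [tight]; [tauto|]. intros [Hpos Hle]. split; [exact Hpos|].
  assert (Ch * INR (S i) <= Ch * INR (S (S i))) by (apply Rmult_le_compat_l, le_INR; lra || lia).
  lra.
Qed.

Lemma tight_down2 j : tight (O, S j) -> tight (O, j).
Proof.
  destruct j as [|j]; cbn [tight]; [tauto|]. intros [Hpos Hle]. split; [exact Hpos|].
  assert (Ch * INR (S j) <= Ch * INR (S (S j))) by (apply Rmult_le_compat_l, le_INR; lra || lia).
  lra.
Qed.

Lemma tight_lt_M1 i : tight (S i, O) -> (S i < M)%nat.
Proof.
  cbn [tight]. intros [_ Hle].
  apply (lt_of_gain Ch Ct g (p1 * Ct)); nra.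
Qed.

Lemma tight_lt_M2 j : tight (O, S j) -> (S j < M)%nat.
Proof.
  cbn [tight]. intros [_ Hle].
  apply (lt_of_gain Ch Ct g (p2 * Ct)); nra.
Qed.

Lemma good_corner i j : tight (i, j) -> good (S i, S j).
Proof. unfold good, post. cbn [act_opt fst snd act_nat Nat.sub]. rewrite !Nat.sub_0_r. tauto. Qed.

(* Below level [M], an idle decision is only taken where the axis equation is tight. *)
Lemma good_axis1 k : (S k <= M)%nat -> tight (k, O) -> good (S k, O).
Proof.
  intros Hk Hdown. unfold good, post. cbn [act_opt].
  destruct (Rle_dec Ct (incr1 (S k))) as [_|Hlt]; cbn [fst snd act_nat Nat.sub];
    rewrite ?Nat.sub_0_r; [exact Hdown|].
  apply Rnot_le_lt in Hlt.
  destruct (incr_lt_Ct ((1 - p1) * p2) (p1 * (1 - p2)) p1 Ch Ct g M ltac:(nra) HCh (S k) Hk Hlt)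
    as [Hpos Hgain].
  cbn [tight]. split; lra.
Qed.

Lemma good_axis2 k : (S k <= M)%nat -> tight (O, k) -> good (O, S k).
Proof.
  intros Hk Hdown. unfold good, post. cbn [act_opt].
  destruct (Rle_dec Ct (incr2 (S k))) as [_|Hlt]; cbn [fst snd act_nat Nat.sub];
    rewrite ?Nat.sub_0_r; [exact Hdown|].
  apply Rnot_le_lt in Hlt.
  destruct (incr_lt_Ct (p1 * (1 - p2)) ((1 - p1) * p2) p2 Ch Ct g M ltac:(nra) HCh (S k) Hk Hlt)
    as [Hpos Hgain].
  cbn [tight]. split; lra.
Qed.

Lemma good_closed y q y' : good y -> In (q, y') (trans p1 p2 y (act_opt y)) -> good y'.
Proof.
  intros Hy Hin. rewrite trans_post in Hin. unfold good at 1 in Hy.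
  destruct (In_arrivals _ _ _ _ _ Hin) as [-> | [-> | [-> | ->]]]; clear Hin;
    destruct (post y (act_opt y)) as [[|i] [|j]]; cbn [fst snd];
    try (exact (good_corner _ _ Hy)); try (destruct Hy; fail).
  - apply good_axis2; [apply Nat.lt_le_incl, tight_lt_M2 | apply tight_down2]; exact Hy.
  - apply good_axis1; [apply Nat.lt_le_incl, tight_lt_M1 | apply tight_down1]; exact Hy.
  - apply good_axis1; [exact HM1 | exact Hy].
  - apply good_corner, tight_down2, Hy.
  - apply good_axis1; [apply tight_lt_M1 | ]; exact Hy.
  - apply good_axis2; [exact HM1 | exact Hy].
  - apply good_axis2; [apply tight_lt_M2 | ]; exact Hy.
  - apply good_corner, tight_down1, Hy.
Qed.

Lemma rel_value_bounded : exists B, forall y, Rabs (rel_value y) <= B.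
Proof.
  destruct (bounded_of_eventually_constant (cumsum incr1) M) as [B1 HB1].
  { apply cumsum_eventually_constant. intros k Hk. apply incr_beyond, Hk. }
  destruct (bounded_of_eventually_constant (cumsum incr2) M) as [B2 HB2].
  { apply cumsum_eventually_constant. intros k Hk. apply incr_beyond, Hk. }
  exists (Ct + B1 + B2). intros [i j]. apply Rabs_le_between.
  pose proof (proj1 (Rabs_le_between _ _) (HB1 i)).
  pose proof (proj1 (Rabs_le_between _ _) (HB1 (Nat.pred i))).
  pose proof (proj1 (Rabs_le_between _ _) (HB2 j)).
  pose proof (proj1 (Rabs_le_between _ _) (HB2 (Nat.pred j))).
  destruct i, j; unfold rel_value, post_value; cbn [fst snd Nat.pred] in *; lra.
Qed.

End Relay.

Lemma gain_exists p1 p2 Ch Ct M : 0 <= p1 <= 1 -> 0 <= p2 <= 1 -> 0 < Ch -> 0 < Ct ->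
  (1 <= M)%nat -> exists g, 0 <= g <= Ct /\
    g = p1 * (1 - p2) * incr1 p1 p2 Ch Ct g M 1 + (1 - p1) * p2 * incr2 p1 p2 Ch Ct g M 1
        + p1 * p2 * Ct.
Proof.
  intros Hp1 Hp2 HCh HCt HM1.
  set (F := fun g => p1 * (1 - p2) * incr1 p1 p2 Ch Ct g M 1
                     + (1 - p1) * p2 * incr2 p1 p2 Ch Ct g M 1 + p1 * p2 * Ct - g).
  assert (HF : continuity F).
  { unfold F, incr1, incr2.
    apply continuity_minus; [|apply derivable_continuous, derivable_id].
    apply continuity_plus; [apply continuity_plus|apply continuity_const; intros ? ?; reflexivity];
      apply continuity_mult; try (apply continuity_const; intros ? ?; reflexivity);
      apply continuity_incr. }
  assert (Hw1 : 0 <= p1 * (1 - p2)) by nra.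
  assert (Hw2 : 0 <= (1 - p1) * p2) by nra.
  assert (Hw3 : 0 <= p1 * p2) by nra.
  assert (HF0 : 0 <= F 0).
  { unfold F, incr1, incr2. rewrite !incr_eq_Ct by (simpl; nra || lia).
    assert (0 <= p1 * (1 - p2) * Ct + (1 - p1) * p2 * Ct + p1 * p2 * Ct)
      by (rewrite <- !Rmult_plus_distr_r; apply Rmult_le_pos; lra).
    lra. }
  assert (HFCt : F Ct <= 0).
  { unfold F.
    pose proof (Rmult_le_compat_l _ _ _ Hw1 (incr1_le p1 p2 Ch Ct Ct M Hp1 Hp2 HCt 1)).
    pose proof (Rmult_le_compat_l _ _ _ Hw2 (incr2_le p1 p2 Ch Ct Ct M Hp1 Hp2 HCt 1)).
    assert (0 <= (1 - p1) * (1 - p2) * Ct) by (apply Rmult_le_pos; nra).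
    lra. }
  destruct (IVT_cor F 0 Ct HF) as (g & Hg & HFg); [lra | nra |].
  exists g. split; [exact Hg|]. unfold F in HFg. lra.
Qed.

Lemma threshold_level_exists Ch Ct : 0 < Ch -> exists M, (1 <= M)%nat /\ Ct < Ch * INR M.
Proof.
  intro HCh. destruct (INR_unbounded (Ct / Ch)) as [n Hn].
  exists (S n). split; [lia|]. rewrite S_INR.
  apply (Rmult_lt_compat_l Ch) in Hn; [|exact HCh].
  replace (Ch * (Ct / Ch)) with Ct in Hn by (field; lra). lra.
Qed.

Theorem theorem2 (p1 p2 Ch Ct : R) :
  0 <= p1 <= 1 -> 0 <= p2 <= 1 -> 0 < Ch -> 0 < Ct ->
  exists ustar : policy,
    admissible ustar /\ stationary ustar /\
    ex_lim_seq (avg_cost p1 p2 Ch Ct ustar) /\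
    forall u : policy, admissible u ->
      Rbar_le (V p1 p2 Ch Ct ustar) (V p1 p2 Ch Ct u).
Proof.
  intros Hp1 Hp2 HCh HCt.
  destruct (threshold_level_exists Ch Ct HCh) as (M & HM1 & HM).
  destruct (gain_exists p1 p2 Ch Ct M Hp1 Hp2 HCh HCt HM1) as (g & [_ Hg] & Hgain).
  destruct (rel_value_bounded p1 p2 Ch Ct g M HCt) as [B HB].
  exists (markov_policy (act_opt p1 p2 Ch Ct g M)).
  apply (markov_policy_optimal p1 p2 Ch Ct g B _ Hp1 Hp2 HB in_space)
    with (good := good p1 p2 Ch Ct g M).
  - intros y a q y'. apply in_space_closed.
  - exact (bellman_subsolution p1 p2 Ch Ct g M Hp1 Hp2 HCh HCt HM1 HM Hg Hgain).
  - exact (good_closed p1 p2 Ch Ct g M Hp1 Hp2 HCh HCt HM1 HM Hg).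
  - exact (bellman_opt p1 p2 Ch Ct g M Hp1 Hp2 HCh HCt HM1 HM Hg Hgain).
  - unfold in_space. cbn. lia.
  - exact I.
  - exact (act_opt_allowed p1 p2 Ch Ct g M HM1).
Qed.
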